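(* Let $m\neq n$ be integers $\ge2$ and let $f\in\mathcal{R}$ be nonzero with $U_mf=\lambda_mf$ and $U_nf=\lambda_nf$. Then $f$ is an eigenfunction of $U_{mn}$, and \[\chi_f(mn)=\chi_f(m)\chi_f(n).\]
   Context: $\mathcal{R}$ denotes the real vector space of rational functions $f(x)=A(x)/B(x)$ with $A,B\in\mathbb{R}[x]$, $B(0)\neq 0$ and $\deg A<\deg B$. For $f\in\mathcal{R}$ with Taylor expansion $f(x)=\sum_{n\ge0}a_nx^n$ at $0$ and a positive integer $q$, $U_qf(x)=\sum_{n\ge 0}a_{qn}x^n$. If $U_qf=\lambda_qf$, define $\chi_f(q)=\lambda_q/|\lambda_q|$ when $\lambda_q\neq0$ and $\chi_f(q)=0$ when $\lambda_q=0$. *)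

From mathcomp Require Import all_boot all_order all_algebra.
From mathcomp Require Import reals.
Set Implicit Arguments. Unset Strict Implicit. Unset Printing Implicit Defensive.
Import Order.TTheory GRing.Theory Num.Theory.
Local Open Scope ring_scope.

(* f = A/B belongs to the space \mathcal{R}: B(0) <> 0 and deg A < deg B. *)
Definition in_calR {R : realType} (A B : {poly R}) : Prop :=
  B.[0] != 0 /\ (size A < size B)%N.

(* a is the Taylor coefficient sequence at 0 of A/B, i.e. the formal power
   series identity  B(x) * sum_n a_n x^n = A(x), coefficientwise. *)
Definition taylor_coefs {R : realType} (A B : {poly R}) (a : nat -> R) : Prop :=
  forall n : nat, \sum_(k < n.+1) B`_k * a (n - k)%N = A`_n.

(* U_q f = lam * f, in terms of the Taylor coefficients a of f:
   sum_n a_{qn} x^n = lam * sum_n a_n x^n. *)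
Definition U_eigen {R : realType} (a : nat -> R) (q : nat) (lam : R) : Prop :=
  forall n : nat, a (q * n)%N = lam * a n.

Definition chi_val {R : realType} (lam : R) : R :=
  if lam == 0 then 0 else lam / `|lam|.

(** Since [U_m (U_n f) = U_(mn) f], the eigenvalue of [f] for [U_(mn)] is
    [lam_m * lam_n]; and [chi_val] is the sign function, which is
    multiplicative. *)
From mathcomp Require Import all_boot all_order all_algebra.
From mathcomp Require Import reals.
Import GRing.Theory Num.Theory.
Local Open Scope ring_scope.

Lemma U_eigenM (R : realType) (a : nat -> R) (m n : nat) (lam_m lam_n : R) :
  U_eigen a m lam_m -> U_eigen a n lam_n -> U_eigen a (m * n) (lam_m * lam_n).
Proof. by move=> Um Un k; rewrite -mulnA Um Un mulrA. Qed.

Lemma chi_val_sgr (R : realType) (x : R) : chi_val x = Num.sg x.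
Proof.
rewrite /chi_val; have [->|x0] := eqVneq x 0; first by rewrite sgr0.
by rewrite {1}[x]numEsg mulfK ?normr_eq0.
Qed.

Lemma chi_valM (R : realType) (x y : R) :
  chi_val (x * y) = chi_val x * chi_val y.
Proof. by rewrite !chi_val_sgr sgrM. Qed.

Theorem mainTheorem6 (R : realType) (m n : nat) (A B : {poly R})
    (a : nat -> R) (lam_m lam_n : R) :
  (2 <= m)%N -> (2 <= n)%N -> m <> n ->
  in_calR A B -> taylor_coefs A B a ->
  (exists k : nat, a k != 0) ->
  U_eigen a m lam_m -> U_eigen a n lam_n ->
  exists lam_mn : R,
    U_eigen a (m * n)%N lam_mn /\
    chi_val lam_mn = chi_val lam_m * chi_val lam_n.
Proof.
move=> _ _ _ _ _ _ Um Un.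
by exists (lam_m * lam_n); split; [exact: U_eigenM | exact: chi_valM].
Qed.
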